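(* Let $\mathrm{AF}_{\mathcal R}(Y^{++})$ be the set of families $(x_\lambda)\in\mathcal R^{Y^{++}}$ with almost finite support. For every $(x_\lambda)\in\mathrm{AF}_{\mathcal R}(Y^{++})$ the family $(x_\lambda E(\lambda))_{\lambda\in Y^{++}}$ is summable in $\mathcal R[[Y]]$, and the map $E:\mathrm{AF}_{\mathcal R}(Y^{++})\to\mathcal R[[Y]]^{W^v}$, $(x_\lambda)\mapsto\sum_{\lambda\in Y^{++}}x_\lambda E(\lambda)$, is a well-defined bijection. In particular every element of $\mathcal R[[Y]]^{W^v}$ has support contained in $Y^+$.
   Context: $I$ finite, $A$ a generalized Cartan matrix, $X,Y$ dual free $\mathbb Z$-modules of finite rank with free families $(\alpha_i)_{i\in I}\subset X$, $(\alpha_i^\vee)_{i\in I}\subset Y$, $\alpha_j(\alpha_i^\vee)=a_{i,j}$; $\mathbb A=Y\otimes\mathbb R$; $r_i(v)=v-\alpha_i(v)\alpha_i^\vee$; $W^v=\langle r_i\rangle$; $Q^\vee_+=\bigoplus\mathbb N\alpha_i^\vee$ and $x\le_{Q^\vee}y$ iff $y-x\in Q^\vee_+$; $C^v_f=\{\alpha_i>0\ \forall i\}$, $\mathcal T=\bigcup_w w\overline{C^v_f}$, $Y^+=Y\cap\mathcal T$, $Y^{++}=Y\cap\overline{C^v_f}$. A set $E\subset Y$ is almost finite if there is a finite $J\subset Y$ with every element of $E$ $\le_{Q^\vee}$ some element of $J$. $\mathcal R$ is a commutative ring. $\mathcal R[[Y]]$ is the set of formal series $\sum_{\lambda\in Y}a_\lambda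 e^\lambda$ with almost finite support, with $e^\lambda e^\mu=e^{\lambda+\mu}$; $\mathcal R[[Y]]^{W^v}$ is the set of such series with $a_{w(\lambda)}=a_\lambda$ for all $w\in W^v$. A family $(a_j)_{j\in J}$ in $\mathcal R[[Y]]$ is summable if for each $\lambda$ only finitely many $a_j$ have nonzero coefficient at $e^\lambda$ and the union of the supports is almost finite; its sum is taken coefficientwise. For $\lambda\in Y^{++}$, $E(\lambda)=\sum_{\mu\in W^v\lambda}e^\mu\in\mathcal R[[Y]]$. *)

From HB Require Import structures.
From mathcomp Require Import all_boot all_order all_algebra.
From Stdlib Require Import ClassicalEpsilon.
Set Implicit Arguments. Unset Strict Implicit. Unset Printing Implicit Defensive.
Import Order.TTheory GRing.Theory Num.Theory.
Local Open Scope ring_scope.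

(* Y = X = Z^n (free Z-modules of rank n), realised as integer row vectors;
   the duality X x Y -> Z is the standard dot product. *)
Notation lat n := 'rV[int]_n.

Definition pairing (n : nat) (x : lat n) (y : lat n) : int :=
  \sum_(k < n) x ord0 k * y ord0 k.

Definition free_family (I : finType) (n : nat) (v : I -> lat n) : Prop :=
  forall c : I -> int, \sum_(i : I) c i *: v i = 0 -> forall i, c i = 0.

Definition gen_cartan (I : finType) (A : I -> I -> int) : Prop :=
  [/\ forall i, A i i = 2,
      forall i j, i != j -> A i j <= 0
    & forall i j, A i j = 0 <-> A j i = 0].

Definition refl (I : finType) (n : nat) (alpha alphav : I -> lat n) (i : I)
  (v : lat n) : lat n :=
  v - (pairing (alpha i) v) *: alphav i.

Definition wact (I : finType) (n : nat) (alpha alphav : I -> lat n)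
  (s : seq I) (v : lat n) : lat n :=
  foldr (refl alpha alphav) v s.

Definition leQ (I : finType) (n : nat) (alphav : I -> lat n) (x y : lat n) : Prop :=
  exists c : I -> nat, y - x = \sum_(i : I) (c i)%:Z *: alphav i.

Definition almost_finite (I : finType) (n : nat) (alphav : I -> lat n)
  (E : lat n -> Prop) : Prop :=
  exists J : seq (lat n), forall x, E x -> exists2 j, j \in J & leQ alphav x j.

(* Y^{++} = Y \cap closure(C^v_f) *)
Definition Ypp (I : finType) (n : nat) (alpha : I -> lat n) (l : lat n) : Prop :=
  forall i, 0 <= pairing (alpha i) l.

(* Y^+ = Y \cap \bigcup_w w(closure C^v_f):  l \in w(closure C) iff w^{-1} l in closure C *)
Definition Yplus (I : finType) (n : nat) (alpha alphav : I -> lat n) (l : lat n) : Prop :=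
  exists s : seq I, Ypp alpha (wact alpha alphav s l).

(* formal series: coefficient functions Y -> R *)
Definition in_series (R : pzRingType) (I : finType) (n : nat) (alphav : I -> lat n)
  (f : lat n -> R) : Prop :=
  almost_finite alphav (fun mu => f mu != 0).

Definition W_invariant (R : pzRingType) (I : finType) (n : nat) (alpha alphav : I -> lat n)
  (f : lat n -> R) : Prop :=
  forall (s : seq I) mu, f (wact alpha alphav s mu) = f mu.

Definition in_inv_series (R : pzRingType) (I : finType) (n : nat) (alpha alphav : I -> lat n)
  (f : lat n -> R) : Prop :=
  in_series alphav f /\ W_invariant alpha alphav f.

(* E(lambda) = sum_{mu in W^v lambda} e^mu *)
Definition in_orbit (I : finType) (n : nat) (alpha alphav : I -> lat n) (l mu : lat n) : Prop :=
  exists s : seq I, mu = wact alpha alphav s l.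

Definition Eorb (R : pzRingType) (I : finType) (n : nat) (alpha alphav : I -> lat n)
  (l : lat n) : lat n -> R :=
  fun mu => if excluded_middle_informative (in_orbit alpha alphav l mu) then 1 else 0.

Definition summable (R : pzRingType) (I : finType) (n : nat) (alphav : I -> lat n)
  (J : eqType) (P : J -> Prop) (F : J -> lat n -> R) : Prop :=
  (forall mu, exists s : seq J, forall j, P j -> F j mu != 0 -> j \in s) /\
  almost_finite alphav (fun mu => exists j, P j /\ F j mu != 0).

Definition is_sum (R : pzRingType) (n : nat) (J : eqType) (P : J -> Prop)
  (F : J -> lat n -> R) (g : lat n -> R) : Prop :=
  forall mu, exists s : seq J,
    [/\ uniq s, forall j, j \in s -> P j,
        forall j, P j -> F j mu != 0 -> j \in s
      & g mu = \sum_(j <- s) F j mu].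

(* AF_R(Y^{++}): families indexed by Y^{++} (values off Y^{++} irrelevant) with
   almost finite support *)
Definition AF (R : pzRingType) (I : finType) (n : nat) (alpha alphav : I -> lat n)
  (x : lat n -> R) : Prop :=
  almost_finite alphav (fun l => Ypp alpha l /\ x l != 0).

Definition Efam (R : pzRingType) (I : finType) (n : nat) (alpha alphav : I -> lat n)
  (x : lat n -> R) : lat n -> lat n -> R :=
  fun l mu => x l * Eorb R alpha alphav l mu.

(* Every element of the orbit of a dominant lam lies below lam for <=_{Q^vee},
   so lam is the only dominant element of its orbit; hence at each mu at most
   one term x_lam E(lam) is non-zero, the family is summable, and its sum takes
   the value x_lam on W^v lam.  The inequality is proved by induction on the
   length d(mu) of a shortest word carrying lam to mu: if alpha_i(mu) < 0 then
   d(r_i mu) < d(mu).  Passing to an element of the orbit that is dominant for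
   the pair (i, j), j the last letter of such a word, this reduces to the
   dihedral group <r_i, r_j>, handled by an explicit computation: an invariant
   cone when a_ij a_ji >= 4, the braid relations of order 2, 3, 4, 6 otherwise.
   Conversely, if g is invariant and alpha_i(mu) < 0 for mu in its support,
   then r_i mu > mu is still in the support, which is bounded above by a
   finite set; a height count shows that these moves stop at a dominant
   element, so supports lie in Y^+ and g is the sum of the g(lam) E(lam). *)

From Pilot Require Import Defs.
From HB Require Import structures.
From mathcomp Require Import all_boot all_order all_algebra.
From mathcomp Require Import ring zify.
From Stdlib Require Import ClassicalEpsilon.
Set Implicit Arguments. Unset Strict Implicit. Unset Printing Implicit Defensive.
Import Order.TTheory GRing.Theory Num.Theory.
Local Open Scope ring_scope.

Lemma pairingB n (x u v : lat n) : pairing x (u - v) = pairing x u - pairing x v.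
Proof. by rewrite /pairing -sumrB; apply: eq_bigr => k _; rewrite !mxE mulrBr. Qed.

Lemma pairingZ n (x v : lat n) c : pairing x (c *: v) = c * pairing x v.
Proof. by rewrite /pairing mulr_sumr; apply: eq_bigr => k _; rewrite mxE mulrCA. Qed.

Section Sums.
Variables (R : pzRingType) (n : nat) (J : eqType) (P : J -> Prop) (F : J -> lat n -> R).

Lemma is_sum_zero g mu : is_sum P F g -> (forall j, P j -> F j mu = 0) -> g mu = 0.
Proof.
move=> hs hz; have [s [_ sP _ ->]] := hs mu.
by rewrite big1_seq // => j /andP [_ /sP]; apply: hz.
Qed.

Lemma is_sum_single g mu j0 :
  is_sum P F g -> P j0 -> (forall j, P j -> F j mu != 0 -> j = j0) -> g mu = F j0 mu.
Proof.
move=> hs Pj0 uniq0; have [s [us sP supp ->]] := hs mu.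
have other j : j \in s -> j != j0 -> F j mu = 0.
  by move=> /sP Pj; apply: contraNeq => /(uniq0 _ Pj) ->.
have [j0s|j0s] := boolP (j0 \in s).
  rewrite (bigD1_seq j0) //= big1_seq ?addr0 // => j /andP [? ?].
  exact: other.
have -> : F j0 mu = 0 by apply: contraNeq j0s; apply: supp.
rewrite big1_seq // => j /andP [_ js].
by have [->|] := eqVneq j j0; [apply: contraNeq j0s; apply: supp | apply: other].
Qed.

Lemma is_sum_exists :
  (forall mu j j', P j -> P j' -> F j mu != 0 -> F j' mu != 0 -> j = j') ->
  exists g, is_sum P F g.
Proof.
move=> uniqF.
pose g mu := if excluded_middle_informative (exists j, P j /\ F j mu != 0) is left h
  then F (proj1_sig (constructive_indefinite_description _ h)) mu else 0.
exists g => mu; rewrite /g; case: excluded_middle_informative => [h|none].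
  case: constructive_indefinite_description => j0 [Pj0 Fj0] /=.
  exists [:: j0]; split; rewrite ?big_seq1 //.
  - by move=> j; rewrite inE => /eqP ->.
  - by move=> j Pj Fj; rewrite inE (uniqF mu j j0).
exists [::]; split; rewrite ?big_nil // => j Pj Fj.
by case: none; exists j.
Qed.

Lemma eq_is_sum g g' : is_sum P F g -> g =1 g' -> is_sum P F g'.
Proof. by move=> hs e mu; rewrite -e; apply: hs. Qed.

End Sums.

(** * Dihedral computations *)

(* A state (p, q, x, y) stands for v + p alpha_i^vee + q alpha_j^vee, with
   x, y its values under alpha_i, alpha_j; refl_i and refl_j are r_i and r_j
   in these coordinates, for a = - a_ij and b = - a_ji.  Words in <r_i, r_j>
   are encoded as boolean sequences, true standing for r_i. *)
Record rank2_state := Rank2State { coef_i : int; coef_j : int; val_i : int; val_j : int }.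

Definition state0 (x y : int) := Rank2State 0 0 x y.

Section Rank2.
Variables a b : int.

Definition refl_i s :=
  Rank2State (coef_i s - val_i s) (coef_j s) (- val_i s) (val_j s + a * val_i s).
Definition refl_j s :=
  Rank2State (coef_i s) (coef_j s - val_j s) (val_i s + b * val_j s) (- val_j s).
Definition refl2 (c : bool) := if c then refl_i else refl_j.

End Rank2.

Fixpoint alternating (c : bool) (k : nat) : seq bool :=
  if k is k'.+1 then c :: alternating (~~ c) k' else [::].

Lemma size_alternating c k : size (alternating c k) = k.
Proof. by elim: k c => //= k IH c; rewrite IH. Qed.

Lemma alternatingD c p q :
  alternating c (p + q) = alternating c p ++ alternating (c (+) odd p) q.
Proof.
elim: p c => [|p IH] c /=; first by rewrite addbF.
by rewrite IH addbN addNb.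
Qed.

Lemma alternatingSr c m : alternating c m.+1 = rcons (alternating c m) (c (+) odd m).
Proof. by rewrite -addn1 alternatingD cats1. Qed.

Lemma bool_seq_split (w : seq bool) :
  (exists w1 c w2, w = w1 ++ c :: c :: w2) \/ exists c, w = alternating c (size w).
Proof.
elim: w => [|c w [[w1 [d [w2 ->]]]|[d hw]]]; first by right; exists true.
- by left; exists (c :: w1), d, w2.
- have [ecd|hcd] := eqVneq c d; first subst d.
    case: w hw => [|e w] hw; first by right; exists c.
    by left; exists [::], c, (alternating (~~ c) (size w)); rewrite hw.
  have ed : d = ~~ c by case: c d hcd {hw} => [] [].
  by right; exists c; rewrite /= -ed -hw.
Qed.

Definition braid (a b : int) (m : nat) :=
  forall x y, let s := foldr (refl2 a b) (state0 x y) (alternating true m) in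
              let s' := foldr (refl2 a b) (state0 x y) (alternating false m) in
  coef_i s = coef_i s' /\ coef_j s = coef_j s'.

(* When ab >= 4, r_i maps the cone {x >= 0, ax + 2y >= 0} into the cone
   {y >= 0, by + 2x >= 0}, and r_j maps it back. *)
Lemma alternating_val_i_ge0 (a b x y : int) : 0 <= a -> 0 <= b -> 4 <= a * b ->
  0 <= x -> 0 <= y ->
  forall k, 0 <= val_i (foldr (refl2 a b) (state0 x y) (alternating false k)).
Proof.
move=> ha hb hab hx hy.
suff inv k c : let s := foldr (refl2 a b) (state0 x y) (alternating c k) in
  if c then 0 <= val_j s /\ 0 <= b * val_j s + 2 * val_i s
  else 0 <= val_i s /\ 0 <= a * val_i s + 2 * val_j s.
  by move=> k; case: (inv k false).
elim: k c => [|k IH] [] /=; first (by split; lia); first (by split; lia).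
- case: (IH false) => /=; set s := foldr _ _ _ => h1 h2.
  have : 0 <= (a * b - 4) * val_i s by apply: mulr_ge0; lia.
  have : 0 <= b * (a * val_i s + 2 * val_j s) by apply: mulr_ge0.
  split; nia.
- case: (IH true) => /=; set s := foldr _ _ _ => h1 h2.
  have : 0 <= (a * b - 4) * val_j s by apply: mulr_ge0; lia.
  have : 0 <= a * (b * val_j s + 2 * val_i s) by apply: mulr_ge0.
  split; nia.
Qed.

(* The pairs (a, b) of finite type: r_i r_j has order m = 2, 3, 4, 6. *)
Lemma rank2_cartan_cases (a b : int) : 0 <= a -> 0 <= b -> (a == 0) = (b == 0) ->
  4 <= a * b \/
  (a, b) = (0, 0) \/ (a, b) = (1, 1) \/ (a, b) = (1, 2) \/ (a, b) = (2, 1) \/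
  (a, b) = (1, 3) \/ (a, b) = (3, 1).
Proof.
move=> ha hb hab; have [|hlt] := lerP 4 (a * b); [by left | right].
have [a0|a1] : a = 0 \/ 0 < a by lia.
  by left; move: hab; rewrite a0 eqxx => /esym/eqP ->.
have b1 : 0 < b by move: hab; rewrite (gt_eqF a1) => /esym/negbT; lia.
have [a3 b3] : a <= 3 /\ b <= 3 by split; nia.
have ha' : a = 1 \/ a = 2 \/ a = 3 by lia.
have hb' : b = 1 \/ b = 2 \/ b = 3 by lia.
by case: ha' hb' hlt => [->|[->|->]] [->|[->|->]] hlt;
  first [lia | do ?[by left | right]].
Qed.

Lemma rank2_exchange (a b x y : int) (k : nat) :
  0 <= a -> 0 <= b -> (a == 0) = (b == 0) -> 0 <= x -> 0 <= y ->
  val_i (foldr (refl2 a b) (state0 x y) (alternating false k)) < 0 ->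
  exists2 m, (0 < m <= k)%N & braid a b m.
Proof.
move=> ha hb hab hx hy hneg.
have [hinf|hfin] := rank2_cartan_cases ha hb hab.
  by move: hneg; rewrite ltNge alternating_val_i_ge0.
move: hneg; case: hfin => [|[|[|[|[|]]]]] [-> ->] hneg;
  [exists 2%N | exists 3%N | exists 4%N | exists 4%N | exists 6%N | exists 6%N];
  try (by move=> x' y' /=; split; ring);
  by case: k hneg => [|[|[|[|[|[|k]]]]]] //= hneg; lia.
Qed.

Section KacMoody.
Variables (I : finType) (n : nat) (A : I -> I -> int) (alpha alphav : I -> lat n).
Hypotheses (cartanA : gen_cartan A) (free_alphav : free_family alphav)
  (pairing_A : forall i j, pairing (alpha j) (alphav i) = A i j).

Local Notation al i v := (pairing (alpha i) v).
Local Notation r := (refl alpha alphav).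
Local Notation W := (wact alpha alphav).
Local Notation "x <=Q y" := (leQ alphav x y) (at level 70).
Local Notation Worbit := (Defs.in_orbit alpha alphav).
Local Notation dominant := (Ypp alpha).

Lemma al_refl i j v : al j (r i v) = al j v - al i v * A i j.
Proof. by rewrite /refl pairingB pairingZ pairing_A. Qed.

Lemma al_refl_id i v : al i (r i v) = - al i v.
Proof. by case: cartanA => Aii _ _; rewrite al_refl Aii; ring. Qed.

Lemma reflK i : involutive (r i).
Proof. by move=> v; rewrite {1}/refl al_refl_id /refl scaleNr opprK addrNK. Qed.

Lemma wact_cat s t v : W (s ++ t) v = W s (W t v).
Proof. exact: foldr_cat. Qed.

Lemma wact_revK s : cancel (W s) (W (rev s)).
Proof.
elim: s => [//|i s IH] v.
by rewrite rev_cons -cats1 wact_cat /= reflK IH.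
Qed.

Lemma wact_cancel s1 i s2 v : W (s1 ++ i :: i :: s2) v = W (s1 ++ s2) v.
Proof. by rewrite !wact_cat /= reflK. Qed.

Lemma in_orbit_refl l : Worbit l l.
Proof. by exists [::]. Qed.

Lemma in_orbit_sym l mu : Worbit l mu -> Worbit mu l.
Proof. by case=> s ->; exists (rev s); rewrite wact_revK. Qed.

Lemma in_orbit_wact l mu s : Worbit l mu -> Worbit l (W s mu).
Proof. by case=> t ->; exists (s ++ t); rewrite wact_cat. Qed.

Lemma in_orbit_trans l mu nu : Worbit l mu -> Worbit mu nu -> Worbit l nu.
Proof. by move=> olmu [s ->]; apply: in_orbit_wact. Qed.

Lemma Yplus_of_orbit l mu : dominant l -> Worbit l mu -> Yplus alpha alphav mu.
Proof. by move=> dl [s ->]; exists (rev s); rewrite wact_revK. Qed.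

Lemma Yplus_orbit mu : Yplus alpha alphav mu -> exists2 l, dominant l & Worbit l mu.
Proof. by case=> s ds; exists (W s mu) => //; apply/in_orbit_sym; exists s. Qed.

Lemma leQ_refl x : x <=Q x.
Proof. by exists (fun _ => 0%N); rewrite subrr big1 // => k _; rewrite scale0r. Qed.

Lemma leQ_trans x y z : x <=Q y -> y <=Q z -> x <=Q z.
Proof.
move=> [c1 h1] [c2 h2]; exists (fun k => c1 k + c2 k)%N.
rewrite -(subrKA y) h1 h2 addrC -big_split; apply: eq_bigr => k _.
by rewrite PoszD scalerDl.
Qed.

Lemma leQ_refl_step i v : 0 <= al i v -> r i v <=Q v.
Proof.
move=> hv; exists (fun k => if k == i then `|al i v|%N else 0%N).
rewrite (bigD1 i) //= eqxx big1 ?addr0 => [|k /negPf->]; last by rewrite scale0r.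
by rewrite gez0_abs // /refl opprB addrC subrK.
Qed.

Lemma coroot_coef_inj (c c' : I -> nat) :
  \sum_k (c k)%:Z *: alphav k = \sum_k (c' k)%:Z *: alphav k -> c =1 c'.
Proof.
move=> e k; have : \sum_k ((c k)%:Z - (c' k)%:Z) *: alphav k = 0.
  by rewrite (eq_bigr _ (fun k _ => scalerBl _ _ _)) sumrB e subrr.
by move/free_alphav/(_ k)/eqP; rewrite subr_eq0 => /eqP [].
Qed.

(* Defaults to 0 outside Q^vee_+. *)
Definition height (d : lat n) : nat :=
  if excluded_middle_informative (exists c : I -> nat, d = \sum_k (c k)%:Z *: alphav k)
    is left h then \sum_k proj1_sig (constructive_indefinite_description _ h) k else 0.

Lemma heightE (c : I -> nat) : height (\sum_k (c k)%:Z *: alphav k) = (\sum_k c k)%N.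
Proof.
rewrite /height; case: excluded_middle_informative => [h|[]]; last by exists c.
case: constructive_indefinite_description => c' /= /esym/coroot_coef_inj e.
by apply: eq_bigr => k _; rewrite e.
Qed.

Lemma height_leQD x y z : x <=Q y -> y <=Q z ->
  height (z - x) = (height (z - y) + height (y - x))%N.
Proof.
move=> [c1 h1] [c2 h2]; rewrite h1 h2 !heightE -big_split /=.
rewrite -(@heightE (fun k => c2 k + c1 k)%N) -(subrKA y) h1 h2 -big_split /=.
by congr height; apply: eq_bigr => k _; rewrite PoszD scalerDl.
Qed.

Lemma height_gt0 x y : x <=Q y -> x != y -> (0 < height (y - x))%N.
Proof.
move=> [c e] xy; rewrite e heightE lt0n sum_nat_eq0; apply: contra xy => /forallP c0.
rewrite eq_sym -subr_eq0 e big1 // => k _.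
by move: (c0 k) => /eqP ->; rewrite scale0r.
Qed.

Lemma leQ_anti x y : x <=Q y -> y <=Q x -> x = y.
Proof.
move=> xy yx; apply/eqP; apply: contraT => nxy.
have height0 : height 0 = 0%N.
  transitivity (height (\sum_k (0%N)%:Z *: alphav k)); last by rewrite heightE big1_eq.
  by congr height; rewrite big1 // => k _; rewrite scale0r.
have := height_leQD xy yx; have := height_gt0 xy nxy.
by rewrite subrr height0; lia.
Qed.

(** * Rank-2 subgroups *)

Definition letter (i j : I) (c : bool) := if c then i else j.

Definition word_state i j (v : lat n) (w : seq bool) :=
  foldr (refl2 (- A i j) (- A j i)) (state0 (al i v) (al j v)) w.

Lemma wact_letters i j w v : let s := word_state i j v w in
  [/\ W (map (letter i j) w) v = v + coef_i s *: alphav i + coef_j s *: alphav j,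
      al i (W (map (letter i j) w) v) = val_i s
    & al j (W (map (letter i j) w) v) = val_j s].
Proof.
elim: w => [|c w IH] /=; first by rewrite !scale0r !addr0.
case: IH; rewrite /word_state; set s := foldr _ _ _ => e hi hj.
case: c; rewrite /= al_refl_id al_refl ?hi ?hj /refl ?hi ?hj e; split; try ring.
- by rewrite scalerBl addrAC addrA.
- by rewrite scalerBl addrA.
Qed.

Lemma wact_braid i j m : braid (- A i j) (- A j i) m ->
  W (map (letter i j) (alternating true m)) =1 W (map (letter i j) (alternating false m)).
Proof.
move=> hb v; have [e1 _ _] := wact_letters i j (alternating true m) v.
have [e2 _ _] := wact_letters i j (alternating false m) v.
by rewrite e1 e2; have [-> ->] := hb (al i v) (al j v).
Qed.

Lemma cartan_rank2 i j : i != j ->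
  [/\ 0 <= - A i j, 0 <= - A j i & (- A i j == 0) = (- A j i == 0)].
Proof.
case: cartanA => _ Aneg Asym ij; have ji : j != i by rewrite eq_sym.
rewrite !oppr_ge0 !oppr_eq0 !Aneg //; split=> //.
by apply/eqP/eqP => /Asym.
Qed.

Lemma rank2_shorten i j nu w : i != j -> 0 <= al i nu -> 0 <= al j nu ->
  al i (W (map (letter i j) w) nu) < 0 ->
  exists2 w', W (map (letter i j) w') nu = r i (W (map (letter i j) w) nu)
            & (size w' < size w)%N.
Proof.
move=> ij hi hj; have [N] := ubnP (size w); elim: N w => // N IH w.
have [[w1 [c [w2 ew]]] hN hneg|[[] ew]] := bool_seq_split w.
- have ecancel : W (map (letter i j) w) nu = W (map (letter i j) (w1 ++ w2)) nu.
    by rewrite ew !map_cat wact_cancel.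
  rewrite ecancel in hneg *.
  have [|//|w' ew' hw'] := IH (w1 ++ w2); first by move: hN; rewrite ew !size_cat /=; lia.
  by exists w' => //; move: hw'; rewrite ew !size_cat /=; lia.
- rewrite ew size_alternating; case: (size w) => [|k] _ /=; first by rewrite ltNge hi.
  by move=> _; exists (alternating false k); rewrite ?reflK ?size_alternating.
- rewrite ew size_alternating; set k := size w => hN hneg.
  have [_ hval _] := wact_letters i j (alternating false k) nu.
  rewrite hval in hneg.
  have [a0 b0 ab0] := cartan_rank2 ij.
  have [[//|m] /andP [_ mk] hbraid] := rank2_exchange a0 b0 ab0 hi hj hneg.
  have [q ek] : exists q, k.+1 = (m.+1 + q.+1)%N by exists (k - m.+1)%N; lia.
  exists (alternating false m ++ alternating (~~ odd m) q); last first.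
    by rewrite size_cat !size_alternating; lia.
  have eword : alternating false m.+1 ++ alternating (true (+) odd m.+1) q.+1 =
      alternating false m ++ odd m :: odd m :: alternating (~~ odd m) q.
    by rewrite alternatingSr cat_rcons /= negbK.
  rewrite -[r i _]/(W (map (letter i j) (alternating true k.+1)) nu) ek alternatingD.
  rewrite [in RHS]map_cat [in RHS]wact_cat wact_braid // -wact_cat -map_cat eword.
  by rewrite [in RHS]map_cat wact_cancel map_cat.
Qed.

(* Defaults to 0 when mu is not in the orbit of lam. *)
Definition word_dist (lam mu : lat n) : nat :=
  if excluded_middle_informative (exists k, [exists t : k.-tuple I, W t lam == mu])
    is left h then ex_minn h else 0.

Lemma word_dist_spec lam mu s : mu = W s lam ->
  (word_dist lam mu <= size s)%N /\ exists2 t, size t = word_dist lam mu & mu = W t lam.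
Proof.
move=> e; have ex_s : [exists t : (size s).-tuple I, W t lam == mu].
  by apply/existsP; exists (in_tuple s); rewrite e.
rewrite /word_dist; case: excluded_middle_informative => [h|[]]; last by exists (size s).
case: ex_minnP => k /existsP [t /eqP et] kmin; split; first exact: kmin.
by exists t; rewrite ?size_tuple.
Qed.

Lemma word_dist_le lam s : (word_dist lam (W s lam) <= size s)%N.
Proof. by case: (word_dist_spec (erefl (W s lam))). Qed.

Lemma word_dist_witness lam mu : Worbit lam mu ->
  exists2 t, size t = word_dist lam mu & mu = W t lam.
Proof. by case=> s /word_dist_spec []. Qed.

Lemma word_dist_wact lam mu u : Worbit lam mu ->
  (word_dist lam (W u mu) <= word_dist lam mu + size u)%N.
Proof.
case/word_dist_witness=> t <- ->; rewrite -wact_cat addnC -size_cat.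
exact: word_dist_le.
Qed.

Section DominantOrbit.
Variable lam : lat n.
Hypothesis lam_dominant : dominant lam.
Local Notation dist := (word_dist lam).

Lemma rank2_dominant_descent i j N :
  (forall nu x, (dist nu <= N)%N -> Worbit lam nu -> al x nu < 0 -> (dist (r x nu) < dist nu)%N) ->
  forall nu w, Worbit lam nu -> (dist nu <= N)%N ->
  exists nu' w', [/\ Worbit lam nu', W (map (letter i j) w') nu' = W (map (letter i j) w) nu,
    (dist nu' + size w' <= dist nu + size w)%N, 0 <= al i nu' & 0 <= al j nu'].
Proof.
move=> descent nu w onu; have [M] := ubnP (dist nu); elim: M nu w onu => // M IH nu w onu hM hN.
have [/andP [hi hj]|ndom] := boolP ((0 <= al i nu) && (0 <= al j nu)).
  by exists nu, w; split.
have [c hc] : exists c, al (letter i j c) nu < 0.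
  by move: ndom; rewrite negb_and -!ltNge => /orP [h|h]; [exists true | exists false].
have o1 : Worbit lam (r (letter i j c) nu) by apply: (in_orbit_wact [:: _]).
have d1 := descent _ _ hN onu hc.
have [||nu' [w' [o' e' d' hi hj]]] := IH _ (rcons w c) o1; [lia | lia |].
exists nu', w'; split => //.
- by rewrite e' -cats1 map_cat wact_cat /= reflK.
- by move: d'; rewrite size_rcons; lia.
Qed.

Lemma word_dist_refl_lt mu i : Worbit lam mu -> al i mu < 0 -> (dist (r i mu) < dist mu)%N.
Proof.
move=> omu; have [N] := ubnP (dist mu); elim: N mu i omu => // N IH mu i omu hN hneg.
have [[|j t] ht emu] := word_dist_witness omu.
  by move: hneg; rewrite emu ltNge lam_dominant.
set mu' := W t lam; have omu' : Worbit lam mu' by exists t.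
have dmu' : (dist mu' < dist mu)%N by rewrite -ht; apply: word_dist_le.
have [eij|ij] := eqVneq i j; first by rewrite {1}emu -eij /= reflK.
have descent nu x : (dist nu <= dist mu')%N -> Worbit lam nu -> al x nu < 0 ->
    (dist (r x nu) < dist nu)%N.
  by move=> dnu onu; apply: IH => //; lia.
have [nu [w [onu ew dw hi hj]]] := rank2_dominant_descent i j descent [:: false] omu' (leqnn _).
have emu' : mu = r j mu' := emu.
rewrite /= -emu' in ew.
have negw : al i (W (map (letter i j) w) nu) < 0 by rewrite ew.
have [w' ew' hw'] := rank2_shorten ij hi hj negw.
have := word_dist_wact (map (letter i j) w') onu; rewrite ew' ew size_map /=.
move: dw; rewrite /=; lia.
Qed.

Lemma orbit_leQ mu : Worbit lam mu -> mu <=Q lam.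
Proof.
move=> omu; have [N] := ubnP (dist mu); elim: N mu omu => // N IH mu omu hN.
have [[|j t] ht emu] := word_dist_witness omu; first by rewrite emu; apply: leQ_refl.
have omu' : Worbit lam (W t lam) by exists t.
have dmu' := word_dist_le lam t.
have hj : 0 <= al j (W t lam).
  rewrite leNgt; apply/negP => /(word_dist_refl_lt omu').
  by rewrite -[r j _]/(W (j :: t) lam) -emu -ht /=; lia.
apply: leQ_trans (IH _ omu' _); last by move: hN; rewrite -ht /=; lia.
by rewrite emu; apply: leQ_refl_step.
Qed.

End DominantOrbit.

Lemma dominant_in_orbit_eq l l' mu :
  dominant l -> dominant l' -> Worbit l mu -> Worbit l' mu -> l = l'.
Proof.
move=> dl dl' olmu ol'mu; have oll' := in_orbit_trans olmu (in_orbit_sym ol'mu).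
by apply: leQ_anti; [exact: (orbit_leQ dl' (in_orbit_sym oll')) | exact: (orbit_leQ dl oll')].
Qed.

(** * Supports of invariant series *)

Lemma leQ_refl_stepN i v : al i v <= 0 -> v <=Q r i v.
Proof.
move=> hv; rewrite -{1}(reflK i v); apply: leQ_refl_step.
by rewrite al_refl_id oppr_ge0.
Qed.

Lemma refl_neq i v : al i v != 0 -> r i v != v.
Proof. by move=> hv; apply/eqP => e; move: (al_refl_id i v); rewrite e; lia. Qed.

Definition depth (j nu : lat n) : nat :=
  if excluded_middle_informative (nu <=Q j) is left _ then (height (j - nu)).+1 else 0.

Lemma depth_le j nu nu' : nu <=Q nu' -> (depth j nu' <= depth j nu)%N.
Proof.
rewrite /depth => le_nu; case: excluded_middle_informative => // le_j.
case: excluded_middle_informative => [_|[]]; last exact: leQ_trans le_j.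
by rewrite (height_leQD le_nu le_j); lia.
Qed.

Lemma depth_lt j nu nu' : nu <=Q nu' -> nu != nu' -> nu' <=Q j ->
  (depth j nu' < depth j nu)%N.
Proof.
move=> le_nu neq le_j; rewrite /depth.
case: excluded_middle_informative => [_|[]] //.
case: excluded_middle_informative => [_|[]]; last exact: leQ_trans le_j.
by rewrite (height_leQD le_nu le_j) ltnS -addn1 leq_add2l height_gt0.
Qed.

Lemma sum_depth_lt (J : seq (lat n)) nu nu' : nu <=Q nu' -> nu != nu' ->
  (exists2 j, j \in J & nu' <=Q j) ->
  (\sum_(j <- J) depth j nu' < \sum_(j <- J) depth j nu)%N.
Proof.
move=> le_nu neq [j0 j0J le_j0]; rewrite !(big_rem _ j0J) /= -addSn.
apply: leq_add; first exact: depth_lt.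
by apply: leq_sum => j _; apply: depth_le.
Qed.

Lemma inv_series_support_Yplus (R : pzRingType) (g : lat n -> R) mu :
  in_inv_series alpha alphav g -> g mu != 0 -> Yplus alpha alphav mu.
Proof.
move=> [[J bounded] ginv] gmu.
suff : forall N s, (\sum_(j <- J) depth j (W s mu) < N)%N -> Yplus alpha alphav mu.
  by move=> /(_ _ [::] (ltnSn _)).
elim=> // N IH s hN.
have [/forallP dom|/forallPn [i]] := boolP [forall i, 0 <= al i (W s mu)]; first by exists s.
rewrite -ltNge => neg; apply: (IH (i :: s)).
suff : (\sum_(j <- J) depth j (W (i :: s) mu) < \sum_(j <- J) depth j (W s mu))%N by lia.
apply: sum_depth_lt; [exact: leQ_refl_stepN (ltW neg) | |].
- by rewrite eq_sym refl_neq // lt_eqF.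
- by apply: bounded; rewrite ginv.
Qed.

Section OrbitSums.
Variable R : pzRingType.
Implicit Types x g : lat n -> R.
Local Notation E x := (Efam alpha alphav x).

Lemma Efam_orbit x l mu : Worbit l mu -> E x l mu = x l.
Proof.
by move=> o; rewrite /Efam /Eorb; case: excluded_middle_informative => [_|[]] //=; rewrite mulr1.
Qed.

Lemma Efam_neq0 x l mu : E x l mu != 0 -> x l != 0 /\ Worbit l mu.
Proof.
rewrite /Efam /Eorb; case: excluded_middle_informative => [o|_] /=; last by rewrite mulr0 eqxx.
by rewrite mulr1.
Qed.

Lemma Efam_contributor_eq x mu l l' : dominant l -> dominant l' ->
  E x l mu != 0 -> E x l' mu != 0 -> l = l'.
Proof. by move=> dl dl' /Efam_neq0 [_ o] /Efam_neq0 [_ o']; apply: dominant_in_orbit_eq o o'. Qed.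

Lemma is_sum_Efam_orbit x g l mu :
  is_sum dominant (E x) g -> dominant l -> Worbit l mu -> g mu = x l.
Proof.
move=> hs dl olmu; rewrite (is_sum_single hs dl) ?Efam_orbit // => j dj /Efam_neq0 [_ ojmu].
exact: dominant_in_orbit_eq ojmu olmu.
Qed.

Lemma is_sum_Efam_out x g mu :
  is_sum dominant (E x) g -> ~ Yplus alpha alphav mu -> g mu = 0.
Proof.
move=> hs notY; apply: (is_sum_zero hs) => j dj.
apply/eqP; apply: contraT => /Efam_neq0 [_ ojmu].
by case: notY; apply: Yplus_of_orbit ojmu.
Qed.

Lemma is_sum_Efam_dominant x g l : is_sum dominant (E x) g -> dominant l -> g l = x l.
Proof. by move=> hs dl; apply: (is_sum_Efam_orbit hs dl (in_orbit_refl l)). Qed.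

Lemma Efam_summable x : AF alpha alphav x -> summable alphav dominant (E x).
Proof.
move=> [J bounded]; split=> [mu|].
  case: (excluded_middle_informative (exists l, dominant l /\ E x l mu != 0)).
    by case=> l [dl El]; exists [:: l] => j dj Ej; rewrite inE (Efam_contributor_eq dj dl Ej El).
  by move=> none; exists [::] => j dj Ej; case: none; exists j.
exists J => mu [l [dl /Efam_neq0 [xl olmu]]].
have [j jJ le_j] := bounded l (conj dl xl).
by exists j => //; apply: leQ_trans (orbit_leQ dl olmu) le_j.
Qed.

Lemma Efam_sum_exists x : exists g, is_sum dominant (E x) g.
Proof. by apply: is_sum_exists => mu j j' dj dj'; apply: Efam_contributor_eq. Qed.

Lemma is_sum_Efam_inv_series x g :
  AF alpha alphav x -> is_sum dominant (E x) g -> in_inv_series alpha alphav g.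
Proof.
move=> [J bounded] hs; split=> [|s mu].
  exists J => mu gmu.
  have [Ymu|notY] := excluded_middle_informative (Yplus alpha alphav mu); last first.
    by move: gmu; rewrite (is_sum_Efam_out hs notY) eqxx.
  have [l dl olmu] := Yplus_orbit Ymu.
  have [j jJ le_j] : exists2 j, j \in J & l <=Q j.
    by apply: bounded; split; rewrite // -(is_sum_Efam_orbit hs dl olmu).
  by exists j => //; apply: leQ_trans (orbit_leQ dl olmu) le_j.
have [/Yplus_orbit [l dl olmu]|notY] := excluded_middle_informative (Yplus alpha alphav mu).
  by rewrite !(is_sum_Efam_orbit hs dl) //; apply: in_orbit_wact.
have notY' : ~ Yplus alpha alphav (W s mu).
  by case=> t dt; apply: notY; exists (t ++ s); rewrite wact_cat.
by rewrite !(is_sum_Efam_out hs).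
Qed.

Lemma inv_series_is_sum_Efam g :
  in_inv_series alpha alphav g -> AF alpha alphav g /\ is_sum dominant (E g) g.
Proof.
move=> gser; have [[J bounded] ginv] := gser; split.
  by exists J => l [_ gl]; apply: bounded.
have [g' hs] := Efam_sum_exists g; apply: (eq_is_sum hs) => mu.
have [/Yplus_orbit [l dl [s ->]]|notY] := excluded_middle_informative (Yplus alpha alphav mu).
  by rewrite (is_sum_Efam_orbit hs dl) ?ginv //; exists s.
rewrite (is_sum_Efam_out hs notY); apply/esym/eqP; apply: contraT => gmu.
by case: notY; apply: inv_series_support_Yplus gser gmu.
Qed.

End OrbitSums.

End KacMoody.

Theorem mainTheorem3 (I : finType) (n : nat) (A : I -> I -> int)
  (alpha alphav : I -> lat n) (R : comPzRingType) :
  gen_cartan A ->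
  free_family alpha -> free_family alphav ->
  (forall i j, pairing (alpha j) (alphav i) = A i j) ->
  [/\ (* summability of (x_lambda E(lambda))_{lambda in Y^{++}} *)
      forall x : lat n -> R, AF alpha alphav x ->
        summable alphav (Ypp alpha) (Efam alpha alphav x) /\
        exists g : lat n -> R, is_sum (Ypp alpha) (Efam alpha alphav x) g,
      (* the map E takes values in R[[Y]]^{W^v} *)
      forall (x g : lat n -> R), AF alpha alphav x ->
        is_sum (Ypp alpha) (Efam alpha alphav x) g ->
        in_inv_series alpha alphav g,
      (* E is injective on AF_R(Y^{++}) *)
      forall (x y g : lat n -> R), AF alpha alphav x -> AF alpha alphav y ->
        is_sum (Ypp alpha) (Efam alpha alphav x) g ->
        is_sum (Ypp alpha) (Efam alpha alphav y) g ->
        forall l, Ypp alpha l -> x l = y l,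
      (* E is surjective onto R[[Y]]^{W^v} *)
      forall g : lat n -> R, in_inv_series alpha alphav g ->
        exists2 x : lat n -> R, AF alpha alphav x &
          is_sum (Ypp alpha) (Efam alpha alphav x) g
    & (* supports of invariant series lie in Y^+ *)
      forall g : lat n -> R, in_inv_series alpha alphav g ->
        forall mu, g mu != 0 -> Yplus alpha alphav mu].
Proof.
move=> cartanA _ free_alphav pairing_A; split.
- move=> x hx; split; first exact: (Efam_summable cartanA free_alphav pairing_A hx).
  exact: (Efam_sum_exists cartanA free_alphav pairing_A).
- exact: (is_sum_Efam_inv_series cartanA free_alphav pairing_A).
- move=> x y g _ _ hx hy l dl.
  rewrite -(is_sum_Efam_dominant cartanA free_alphav pairing_A hx dl).
  exact: (is_sum_Efam_dominant cartanA free_alphav pairing_A hy dl).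
- move=> g /(inv_series_is_sum_Efam cartanA free_alphav pairing_A) [AFg hs].
  by exists g.
- move=> g gser mu gmu.
  exact: (inv_series_support_Yplus cartanA free_alphav pairing_A gser gmu).
Qed.
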